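(* Let $\varsigma,\lambda:[0,1]\to\mathbb{R}_{>0}$ be deterministic Hölder-continuous functions and $f>0$. For integrable $\phi:[0,1]\to\mathbb{R}_{>0}$ with $\int_0^1\phi(s)ds=1$ and integrable $\mu:[0,1]\to[0,\infty)$, consider the asymptotic variance $$V(\phi,\mu):=\frac{2}{f}\int_0^1\frac{\varsigma^4(r)\lambda^2(r)}{\phi(r)}dr+2\int_0^1\varsigma^4(r)\mu(r)dr+\int_0^1\varsigma^4(r)\lambda(r)dr.$$ Then $V(\phi,\mu)$ is minimized by the choice $$\phi(t)=\frac{\varsigma^2(t)\lambda(t)}{\int_0^1\varsigma^2(r)\lambda(r)dr},\qquad\mu(t)=0,$$ and the minimal value equals $\frac{2}{f}\mathrm{IV}^2+\mathrm{IQ}$, where $\mathrm{IV}=\int_0^1\varsigma^2(r)\lambda(r)dr$ and $\mathrm{IQ}=\int_0^1\varsigma^4(r)\lambda(r)dr$.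
   Context: $V(\phi,\mu)$ is the asymptotic variance of $\sqrt{T}(\mathrm{RV}(\boldsymbol{\tau}^T)-\mathrm{IV})$ for a realized variance estimator under a sampling scheme with sampling frequency $f$, sampling intensity function $\phi$ (the limiting normalized inverse of expected waiting times between sampling points) and $\mu$ (the limiting conditional variance rate of the number of ticks between adjacent sampling points), in a tick-time stochastic volatility model with rescaled tick volatility $\varsigma$ and trading intensity $\lambda$. *)

From HB Require Import structures.
From mathcomp Require Import all_boot all_order all_algebra.
From mathcomp Require Import all_classical all_reals all_analysis.
Set Implicit Arguments. Unset Strict Implicit. Unset Printing Implicit Defensive.
Import Order.TTheory GRing.Theory Num.Theory numFieldNormedType.Exports.
Local Open Scope classical_set_scope.
Local Open Scope ring_scope.

Definition holder01 {R : realType} (g : R -> R) : Prop :=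
  exists (C alpha : R), 0 <= C /\ 0 < alpha /\ alpha <= 1 /\
    forall s t, s \in `[0%R, 1%R] -> t \in `[0%R, 1%R] ->
      `|g s - g t| <= C * (`|s - t| `^ alpha).

Definition admissible_phi {R : realType} (phi : R -> R) : Prop :=
  (@lebesgue_measure R).-integrable `[0%R, 1%R] (EFin \o phi) /\
  (forall t, t \in `[0%R, 1%R] -> 0 < phi t) /\
  (\int[@lebesgue_measure R]_(x in `[0%R, 1%R]) (phi x)%:E = 1%:E)%E.

Definition admissible_mu {R : realType} (mu : R -> R) : Prop :=
  (@lebesgue_measure R).-integrable `[0%R, 1%R] (EFin \o mu) /\
  (forall t, t \in `[0%R, 1%R] -> 0 <= mu t).

(* Asymptotic variance V(phi, mu), as an extended real (the first integral
   may be +oo when 1/phi is not integrable). *)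
Definition asymp_var {R : realType} (f : R) (vs lam phi mu : R -> R) : \bar R :=
  ((2 / f)%:E *
     \int[@lebesgue_measure R]_(r in `[0%R, 1%R]) (vs r ^+ 4 * lam r ^+ 2 / phi r)%:E
   + 2%:E * \int[@lebesgue_measure R]_(r in `[0%R, 1%R]) (vs r ^+ 4 * mu r)%:E
   + \int[@lebesgue_measure R]_(r in `[0%R, 1%R]) (vs r ^+ 4 * lam r)%:E)%E.

Definition IV {R : realType} (vs lam : R -> R) : R :=
  Rintegral (@lebesgue_measure R) `[0%R, 1%R] (fun r => vs r ^+ 2 * lam r).
Definition IQ {R : realType} (vs lam : R -> R) : R :=
  Rintegral (@lebesgue_measure R) `[0%R, 1%R] (fun r => vs r ^+ 4 * lam r).

(* With a := vs^2 lam and c := IV = int a, the phi-term is controlled by the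
   Cauchy-Schwarz inequality c^2 <= int a^2 / phi for any probability density
   phi.  It follows by integrating the tangent-line bound
   a^2 / phi >= 2 c a - c^2 phi, which is an equality exactly when phi = a / c.
   The mu-term is nonnegative and vanishes for mu = 0.  Hoelder continuity is
   only used to make a continuous, hence integrable with a positive integral. *)

From HB Require Import structures.
From mathcomp Require Import all_boot all_order all_algebra.
From mathcomp Require Import all_classical all_reals all_analysis.
From mathcomp Require Import measurable_realfun ring lra.
Set Implicit Arguments.
Unset Strict Implicit.
Unset Printing Implicit Defensive.

Import Order.TTheory GRing.Theory Num.Theory numFieldNormedType.Exports.
Local Open Scope classical_set_scope.
Local Open Scope ring_scope.

Lemma tangent_le_sqr_div (F : realFieldType) (a p c : F) :
  0 < p -> 2 * c * a - c ^+ 2 * p <= a ^+ 2 / p.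
Proof. by move=> p_gt0; rewrite ler_pdivlMr //; have := sqr_ge0 (a - c * p); nra. Qed.

Section density_integrals.
Context d (T : measurableType d) (R : realType) (mu : {measure set T -> \bar R}).
Variable D : set T.
Hypothesis mD : measurable D.

Lemma integral_EFin_Rintegral (f : T -> R) : mu.-integrable D (EFin \o f) ->
  (\int[mu]_(x in D) (f x)%:E)%E = (Rintegral mu D f)%:E.
Proof. by move=> fi; rewrite fineK // integrable_fin_num. Qed.

Lemma measurable_funV_gt0 (p : T -> R) : measurable_fun D p ->
  (forall x, D x -> 0 < p x) -> measurable_fun D (fun x => (p x)^-1).
Proof.
move=> mp p_gt0; change (measurable_fun D (GRing.inv \o p)).
apply: (measurable_comp (measurable_itv `]0%R, +oo[) _ _ mp).
- by move=> _ [x Dx <-]; rewrite /= in_itv /= andbT p_gt0.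
- apply: open_continuous_measurable_fun; first exact: interval_open.
  move=> x; rewrite inE /= in_itv /= andbT => x_gt0.
  by apply: inv_continuous; rewrite gt_eqF.
Qed.

Lemma le_integral_ge0 (h g : T -> R) : mu.-integrable D (EFin \o h) ->
  measurable_fun D g -> (forall x, D x -> 0 <= g x) ->
  (forall x, D x -> h x <= g x) ->
  (\int[mu]_(x in D) (h x)%:E <= \int[mu]_(x in D) (g x)%:E)%E.
Proof.
move=> ih mg g_ge0 hg; rewrite integralE.
apply: (@le_trans _ _ (\int[mu]_(x in D) (EFin \o h)^\+ x)%E).
  by rewrite leeBlDr ?leeDl ?integral_ge0 // (integrable_neg_fin_num mD ih).
apply: ge0_le_integral => //.
- exact: measurable_int (integrable_funepos mD ih).
- exact/measurable_EFinP.
- by move=> x Dx; rewrite funeposE ge_max !lee_fin hg // g_ge0.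
Qed.

Lemma integrableZl_EFin (k : R) (f : T -> R) : mu.-integrable D (EFin \o f) ->
  mu.-integrable D (EFin \o (fun x => k * f x)).
Proof.
move=> fi; apply: (eq_integrable mD _ _ _ (integrableZl mD k fi)).
by move=> x _; rewrite /= EFinM.
Qed.

Lemma integrableB_EFin (f g : T -> R) :
  mu.-integrable D (EFin \o f) -> mu.-integrable D (EFin \o g) ->
  mu.-integrable D (EFin \o (fun x => f x - g x)).
Proof.
move=> fi gi; apply: (eq_integrable mD _ _ _ (integrableB mD fi gi)).
by move=> x _; rewrite /= EFinB.
Qed.

Lemma sqr_Rintegral_le_integral_sqr_div (a p : T -> R) :
  mu.-integrable D (EFin \o a) -> mu.-integrable D (EFin \o p) ->
  (forall x, D x -> 0 < p x) -> (\int[mu]_(x in D) (p x)%:E = 1)%E ->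
  (((Rintegral mu D a) ^+ 2)%:E <= \int[mu]_(x in D) (a x ^+ 2 / p x)%:E)%E.
Proof.
move=> ai pi p_gt0 p1; set c := Rintegral mu D a.
have cai := integrableZl_EFin (2 * c) ai.
have cpi := integrableZl_EFin (c ^+ 2) pi.
have Rp1 : Rintegral mu D p = 1.
  by apply: EFin_inj; rewrite -integral_EFin_Rintegral.
have h_c2 : Rintegral mu D (fun x => 2 * c * a x - c ^+ 2 * p x) = c ^+ 2.
  by rewrite RintegralB // !RintegralZl // Rp1 -/c; ring.
rewrite -h_c2 -integral_EFin_Rintegral; last exact: integrableB_EFin.
apply: le_integral_ge0 => //; first exact: integrableB_EFin.
- have ma : measurable_fun D a.
    by apply/measurable_EFinP; exact: measurable_int ai.
  have mp : measurable_fun D p.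
    by apply/measurable_EFinP; exact: measurable_int pi.
  by apply: measurable_funM; [exact: measurable_funX | exact: measurable_funV_gt0].
- by move=> x Dx; rewrite divr_ge0 ?sqr_ge0 ?ltW ?p_gt0.
- by move=> x Dx; rewrite tangent_le_sqr_div ?p_gt0.
Qed.

End density_integrals.

Section within_continuity.
Context {T : topologicalType} {R : realType} (A : set T).

Lemma within_continuousM (f g : T -> R) : {within A, continuous f} ->
  {within A, continuous g} -> {within A, continuous (fun x => f x * g x)}.
Proof. by move=> cf cg x; exact: continuousM (cf x) (cg x). Qed.

Lemma within_continuousX (f : T -> R) n : {within A, continuous f} ->
  {within A, continuous (fun x => f x ^+ n)}.
Proof.
move=> cf x.
apply: (@continuous_comp _ _ _ (from_subspace A f) (@GRing.exp R ^~ n)).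
  exact: cf.
exact: exprn_continuous.
Qed.

End within_continuity.

Section unit_interval.
Variable R : realType.
Local Notation leb := (@lebesgue_measure R).

Lemma holder01_continuous (g : R -> R) :
  holder01 g -> {within `[0%R, 1%R], continuous g}.
Proof.
move=> [C [al [C_ge0 [al_gt0 [_ gH]]]]].
apply/subspace_continuousP => x x01; apply/cvgrPdist_lt => e e_gt0.
have C1_gt0 : 0 < C + 1 by rewrite ltr_wpDl.
pose e' := e / (C + 1).
have e'_gt0 : 0 < e' by rewrite divr_gt0.
exists (e' `^ al^-1); first by rewrite /= powR_gt0.
move=> t /= xt t01; apply: (le_lt_trans (gH x t x01 t01)).
have dist_al : `|x - t| `^ al < e'.
  rewrite -[e'](@powRr1 _ e') ?ltW // -[1](mulVf (lt0r_neq0 al_gt0)) powRrM.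
  by apply: gt0_ltr_powR => //; rewrite nnegrE ?ltW ?powR_gt0.
apply: (le_lt_trans (y := C * e')); first by rewrite ler_wpM2l // ltW.
by rewrite /e' mulrA ltr_pdivrMr // mulrDr mulr1 mulrC ltrDl.
Qed.

Lemma continuous_itv_integrable (a b : R) (g : R -> R) :
  {within `[a, b], continuous g} -> leb.-integrable `[a, b] (EFin \o g).
Proof. by apply: continuous_compact_integrable; exact: segment_compact. Qed.

Lemma Rintegral_itv_gt0 (a b : R) (g : R -> R) : a < b ->
  {within `[a, b], continuous g} -> (forall t, t \in `[a, b] -> 0 < g t) ->
  0 < Rintegral leb `[a, b] g.
Proof.
move=> ab cg g_gt0; have [c cab g_min] := EVT_min (ltW ab) cg.
apply: (@lt_le_trans _ _ (Rintegral leb `[a, b] (fun=> g c))).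
  rewrite Rintegral_cst //.
  have := lebesgue_measure_itv `[a, b]; rewrite /= lte_fin ab => ->.
  by apply: mulr_gt0; [exact: g_gt0 | rewrite /= subr_gt0].
apply: le_Rintegral => //.
- by apply: continuous_itv_integrable; exact: cst_continuous.
- exact: continuous_itv_integrable.
Qed.

Lemma admissible_phi_normalized (g : R -> R) :
  {within `[0%R, 1%R], continuous g} ->
  (forall t, t \in `[0%R, 1%R] -> 0 < g t) ->
  admissible_phi (fun t => g t / Rintegral leb `[0%R, 1%R] g).
Proof.
move=> cg g_gt0; have I_gt0 := Rintegral_itv_gt0 ltr01 cg g_gt0.
have gi := continuous_itv_integrable cg.
have gIi : leb.-integrable `[0%R, 1%R]
    (EFin \o (fun t => g t / Rintegral leb `[0%R, 1%R] g)).
  by apply/continuous_itv_integrable/within_continuousM => //; exact: cst_continuous.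
split=> //; split=> [t t01|]; first by rewrite divr_gt0 ?g_gt0.
by rewrite integral_EFin_Rintegral // RintegralZr // divff // gt_eqF.
Qed.

Lemma admissible_mu0 : admissible_mu (fun=> 0 : R).
Proof. by split=> //; apply: continuous_itv_integrable; exact: cst_continuous. Qed.

End unit_interval.

Section asymptotic_variance.
Variables (R : realType) (vs lam : R -> R).
Hypotheses (vs_cont : {within `[0%R, 1%R], continuous vs})
  (lam_cont : {within `[0%R, 1%R], continuous lam}).
Hypotheses (vs_gt0 : forall t, t \in `[0%R, 1%R] -> 0 < vs t)
  (lam_gt0 : forall t, t \in `[0%R, 1%R] -> 0 < lam t).
Local Notation leb := (@lebesgue_measure R).
Local Notation I01 := ([set` `[0%R, 1%R]] : set R).

Lemma vs2lam_continuous :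
  {within `[0%R, 1%R], continuous (fun r => vs r ^+ 2 * lam r)}.
Proof. by apply: within_continuousM => //; exact: within_continuousX. Qed.

Lemma vs2lam_gt0 t : t \in `[0%R, 1%R] -> 0 < vs t ^+ 2 * lam t.
Proof. by move=> t01; rewrite mulr_gt0 ?exprn_gt0 ?vs_gt0 ?lam_gt0. Qed.

Lemma IV_gt0 : 0 < IV vs lam.
Proof. exact: Rintegral_itv_gt0 ltr01 vs2lam_continuous vs2lam_gt0. Qed.

Lemma integral_vs4lam :
  (\int[leb]_(r in I01) (vs r ^+ 4 * lam r)%:E = (IQ vs lam)%:E)%E.
Proof.
rewrite integral_EFin_Rintegral //; apply: continuous_itv_integrable.
by apply: within_continuousM => //; exact: within_continuousX.
Qed.

Lemma asymp_var_ge (f : R) (phi mu : R -> R) : 0 <= f ->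
  admissible_phi phi -> admissible_mu mu ->
  ((2 / f * IV vs lam ^+ 2 + IQ vs lam)%:E <= asymp_var f vs lam phi mu)%E.
Proof.
move=> f_ge0 [phi_int [phi_gt0 phi1]] [_ mu_ge0].
rewrite /asymp_var integral_vs4lam EFinD EFinM leeD2r // -[X in (X <= _)%E]adde0.
apply: leeD.
- rewrite lee_wpmul2l ?lee_fin ?divr_ge0 //.
  have sqr_vs2lam r : vs r ^+ 4 * lam r ^+ 2 = (vs r ^+ 2 * lam r) ^+ 2 by ring.
  under eq_integral do rewrite sqr_vs2lam.
  apply: sqr_Rintegral_le_integral_sqr_div => //.
  exact/continuous_itv_integrable/vs2lam_continuous.
- apply: mule_ge0 => //; apply: integral_ge0 => r r01.
  by rewrite lee_fin mulr_ge0 ?mu_ge0 // exprn_ge0 // ltW // vs_gt0.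
Qed.

Lemma asymp_var_phistar (f : R) :
  asymp_var f vs lam (fun t => vs t ^+ 2 * lam t / IV vs lam) (fun=> 0)
  = (2 / f * IV vs lam ^+ 2 + IQ vs lam)%:E.
Proof.
have IV_neq0 := lt0r_neq0 IV_gt0.
have first_term : (\int[leb]_(r in I01)
    (vs r ^+ 4 * lam r ^+ 2 / (vs r ^+ 2 * lam r / IV vs lam))%:E
    = (IV vs lam ^+ 2)%:E)%E.
  transitivity (\int[leb]_(r in I01) (IV vs lam * (vs r ^+ 2 * lam r))%:E)%E.
    apply: eq_integral => r /set_mem r01; congr EFin.
    have vs_r := vs_gt0 r01; have lam_r := lam_gt0 r01.
    by field; rewrite IV_neq0 !gt_eqF.
  rewrite integral_EFin_Rintegral ?RintegralZl ?expr2 //.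
  - exact/continuous_itv_integrable/vs2lam_continuous.
  - exact/integrableZl_EFin/continuous_itv_integrable/vs2lam_continuous.
have second_term : (\int[leb]_(r in I01) (vs r ^+ 4 * 0)%:E = 0)%E.
  by under eq_integral do rewrite mulr0; exact: integral0.
rewrite /asymp_var first_term second_term integral_vs4lam.
by rewrite mule0 adde0 -EFinM -EFinD.
Qed.

End asymptotic_variance.

Theorem corollary2 (R : realType) (vs lam : R -> R) (f : R) :
  holder01 vs -> holder01 lam ->
  (forall t, t \in `[0%R, 1%R] -> 0 < vs t) ->
  (forall t, t \in `[0%R, 1%R] -> 0 < lam t) ->
  0 < f ->
  let phistar := fun t => vs t ^+ 2 * lam t / IV vs lam in
  let mustar := fun _ : R => 0 in
  [/\ admissible_phi phistar, admissible_mu mustar,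
      (forall phi mu, admissible_phi phi -> admissible_mu mu ->
         (asymp_var f vs lam phistar mustar <= asymp_var f vs lam phi mu)%E)
    & asymp_var f vs lam phistar mustar
        = (2 / f * IV vs lam ^+ 2 + IQ vs lam)%:E].
Proof.
move=> vs_holder lam_holder vs_gt0 lam_gt0 f_gt0 phistar mustar.
have vs_cont := holder01_continuous vs_holder.
have lam_cont := holder01_continuous lam_holder.
have optimum := asymp_var_phistar vs_cont lam_cont vs_gt0 lam_gt0 f.
split=> //.
- exact: admissible_phi_normalized (vs2lam_continuous vs_cont lam_cont)
                                   (vs2lam_gt0 vs_gt0 lam_gt0).
- exact: admissible_mu0.
- move=> phi mu phi_adm mu_adm; rewrite optimum.
  exact: (asymp_var_ge vs_cont lam_cont vs_gt0 (ltW f_gt0)).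
Qed.
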